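(* Let $\mathcal{X}_{obs}\subset\mathbb{R}^n$ be a nonempty compact convex set. Let $x_0^{plan},\dots,x_N^{plan}\in\mathbb{R}^n$ with $x_{j}^{plan}\ne x_{j-1}^{plan}$, let $0=t_0<t_1<\dots<t_N=T$, and let $x^{plan}(t)$ be the piecewise-linear path with $x^{plan}(t_j)=x_j^{plan}$, linear on each $[t_{j-1},t_j]$; let $\mathcal{S}_j$ be the segment from $x_{j-1}^{plan}$ to $x_j^{plan}$ and assume $\mathcal{S}_j\cap\mathcal{X}_{obs}=\emptyset$ for all $j$. Let $\pmb{x}^{sys}(t)=x^{plan}(t)+R^{1/2}W(t)$, $t\in[0,T]$, where $W$ is a standard $n$-dimensional Brownian motion from the origin and $R$ is symmetric positive definite (equivalently, $d\pmb{x}^{sys}=v_j^{plan}dt+R^{1/2}dW$ on $[t_{j-1},t_j)$ with $v_j^{plan}(t_j-t_{j-1})=x_j^{plan}-x_{j-1}^{plan}$, and $\pmb{x}^{sys}(0)=x_0^{plan}$). For each $j$, let $(y_1^*,y_2^* )$ minimize $\|y_1-y_2\|$ over $y_1\in\mathcal{X}_{obs}$, $y_2\in\mathcal{S}_j$, set $d_j=\|y_1^*-y_2^*\|$, $a_j=(y_1^*-y_2^* )/d_j$, $\pmb{w}_j(t)=a_j^T(\pmb{x}^{sys}(t)-x^{plan}(t))$, $\mathcal{E}_j=\{\max_{t\in[t_{j-1},t_j]}\pmb{w}_j(t)\ge d_j\}$ and $p_j=P(\mathcal{E}_j)$. For each $j$ choose a discretization $t_{j-1}=\hat t_j^0<\dots<\hat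 t_j^{r_j}=t_j$, let $\mathcal{D}_j=\bigcap_{i=0}^{r_j}\{\pmb{w}_j(\hat t_j^i)<d_j\}$ and $p_{j,j+1}^{LB}=1-P(\mathcal{D}_j)-P(\mathcal{D}_{j+1})+P(\mathcal{D}_j\cap\mathcal{D}_{j+1})$. Then the continuous-time risk $\mathcal{R}=P\big(\exists t\in[0,T]:\ \pmb{x}^{sys}(t)\in\mathcal{X}_{obs}\big)$ satisfies $$\mathcal{R}\le\sum_{j=1}^N p_j\quad\text{and}\quad \mathcal{R}\le\sum_{j=1}^N p_j-\sum_{j=1}^{N-1}p_{j,j+1}^{LB}.$$
   Context: $p_j$ can be evaluated as $P(\pmb{w}_j(t_{j-1})\ge d_j)+2P(\pmb{w}_j(t_{j-1})<d_j,\ \pmb{w}_j(t_j)\ge d_j)$, and $p_{j,j+1}^{LB}$ is a lower bound for $P(\mathcal{E}_j\cap\mathcal{E}_{j+1})$; the second inequality is the paper's ''second-order risk bound'' and the first its ''first-order risk bound''. *)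

From HB Require Import structures.
From mathcomp Require Import all_boot all_order all_algebra.
From mathcomp Require Import all_classical all_reals all_analysis.

Set Implicit Arguments.
Unset Strict Implicit.
Unset Printing Implicit Defensive.

Import Order.TTheory GRing.Theory Num.Theory.
Import numFieldNormedType.Exports.

Local Open Scope classical_set_scope.
Local Open Scope ring_scope.

Section Defs.
Context {R : realType}.

Definition dotv n (a v : 'rV[R]_n) : R := \sum_(i < n) a 0 i * v 0 i.
Definition enorm n (v : 'rV[R]_n) : R := Num.sqrt (\sum_(i < n) v 0 i ^+ 2).

Definition convex_set_rV n (X : set 'rV[R]_n) : Prop :=
  forall x y l, X x -> X y -> 0 <= l <= 1 -> X (l *: x + (1 - l) *: y).

Definition segment n (x y : 'rV[R]_n) : set 'rV[R]_n :=
  [set z | exists l : R, 0 <= l <= 1 /\ z = (1 - l) *: x + l *: y].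

Definition sym_mx n (M : 'M[R]_n) : Prop := M^T = M.
Definition posdef_mx n (M : 'M[R]_n) : Prop :=
  forall v : 'rV[R]_n, v != 0 -> 0 < (v *m M *m v^T) 0 0.
Definition possemidef_mx n (M : 'M[R]_n) : Prop :=
  forall v : 'rV[R]_n, 0 <= (v *m M *m v^T) 0 0.

End Defs.

Section Prob.
Context {d : measure_display} {Omega : measurableType d} {R : realType}.
Variable P : probability Omega R.

(** Mutual independence of a finite family of real random variables:
    the joint law is the product of the marginals (taking B i = setT
    recovers the product rule for every subfamily). *)
Definition mutual_indep (I : finType) (X : I -> Omega -> R) : Prop :=
  forall B : I -> set R, (forall i, measurable (B i)) ->
    P (\bigcap_(i in [set: I]) (X i @^-1` B i)) =
    (\prod_(i : I) P (X i @^-1` B i))%E.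

(** Standard n-dimensional Brownian motion started at the origin, indexed by
    t in [0, +oo[ (values at t < 0 are irrelevant):
    - W 0 = 0,
    - continuous sample paths (every coordinate, every outcome),
    - each coordinate W t _ 0 i (t >= 0) is a random variable,
    - for every partition 0 = s_0 < s_1 < ... < s_k, the increments of all
      coordinates W(s_{m+1})_i - W(s_m)_i are mutually independent and
      N(0, s_{m+1} - s_m) distributed (normal_prob takes the std. deviation). *)
Definition std_brownian n (W : R -> Omega -> 'rV[R]_n) : Prop :=
  [/\ forall w, W 0 w = 0,
      forall w (i : 'I_n), {within `[0, +oo[%classic,
                              continuous (fun t => W t w 0 i)},
      forall t (i : 'I_n), 0 <= t -> measurable_fun setT (fun w => W t w 0 i) &
      forall (k : nat) (s : nat -> R), s 0%N = 0 ->
        (forall m, (m < k)%N -> s m < s m.+1) ->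
        mutual_indep (fun p : 'I_n * 'I_k =>
                        fun w => W (s p.2.+1) w 0 p.1 - W (s p.2) w 0 p.1)
        /\ forall (i : 'I_n) (m : 'I_k) (B : set R), measurable B ->
             P ((fun w => W (s m.+1) w 0 i - W (s m) w 0 i) @^-1` B) =
             normal_prob 0 (Num.sqrt (s m.+1 - s m)) B].

End Prob.

(* If the system meets the obstacle at a time s of the j-th leg, the plan point
   x^plan(s) lies on the segment S_j, so the closest pair (y1_j, y2_j) of the two
   convex sets Xobs and S_j separates them: the deviation w_j(s), i.e. the
   component of x^sys(s) - x^plan(s) along a_j, is at least d_j. Hence the risk
   event lies in the union of the E_j, and the chain bound
   P(U_j E_j) <= sum_j P(E_j) - sum_j P(E_j & E_{j+1}) gives both inequalities,
   because ~D_j is contained in E_j and P(~D_j & ~D_{j+1}) = p_{j,j+1}^LB. *)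

From HB Require Import structures.
From mathcomp Require Import all_boot all_order all_algebra.
From mathcomp Require Import all_classical all_reals all_analysis.
From mathcomp Require Import ring lra zify.

Import Order.TTheory GRing.Theory Num.Theory.
Import numFieldNormedType.Exports.

Local Open Scope classical_set_scope.
Local Open Scope ring_scope.

Section real_probability.
Context {d : measure_display} {T : measurableType d} {R : realType}.
Variable P : probability T R.

Definition pr (A : set T) : R := fine (P A).

Lemma prE A : measurable A -> P A = (pr A)%:E.
Proof.
move=> mA; rewrite /pr fineK // ge0_fin_numE //.
by rewrite (le_lt_trans (probability_le1 P mA)) ?ltry.
Qed.

Lemma pr_ge0 A : 0 <= pr A.
Proof. by rewrite /pr fine_ge0. Qed.

Lemma le_pr A B : measurable A -> measurable B -> A `<=` B -> pr A <= pr B.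
Proof.
by move=> mA mB AB; rewrite -lee_fin -!prE // le_measure ?inE.
Qed.

Lemma pr_setU A B : measurable A -> measurable B ->
  pr (A `|` B) = pr A + pr B - pr (A `&` B).
Proof.
move=> mA mB; apply: EFin_inj.
rewrite EFinB EFinD -!prE //; [|exact: measurableI|exact: measurableU].
by rewrite measureUfinl // (le_lt_trans (probability_le1 P mA)) ?ltry.
Qed.

Lemma pr_setC A : measurable A -> pr (~` A) = 1 - pr A.
Proof.
move=> mA; apply: EFin_inj.
by rewrite -prE ?probability_setC // ?EFinB -?prE //; exact: measurableC.
Qed.

Lemma pr_setCI A B : measurable A -> measurable B ->
  pr (~` A `&` ~` B) = 1 - pr A - pr B + pr (A `&` B).
Proof.
move=> mA mB; rewrite -setCU pr_setC ?pr_setU //; [ring | exact: measurableU].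
Qed.

Lemma pr_chain_bigsetU (E : nat -> set T) m :
  (forall j, (1 <= j <= m)%N -> measurable (E j)) ->
  pr (\big[setU/set0]_(1 <= j < m.+1) E j) <=
  \sum_(1 <= j < m.+1) pr (E j) - \sum_(1 <= j < m) pr (E j `&` E j.+1).
Proof.
elim: m => [|m IH] mE; first by rewrite !big_geq // /pr measure0 subrr.
set U := \big[setU/set0]_(1 <= j < m.+1) E j.
have mU : measurable U.
  rewrite /U big_nat_cond; apply: bigsetU_measurable => j /andP[/andP[? ?] _].
  by apply: mE; lia.
have mEm1 : measurable (E m.+1) by apply: mE; lia.
rewrite big_nat_recr //= [X in X - _]big_nat_recr //= pr_setU //.
have {}IH := IH (fun j hj => mE j ltac:(lia)).
case: m => [|m] in mE U mU mEm1 IH *.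
  by rewrite /U !big_geq // set0I /pr measure0; lra.
rewrite [X in _ <= _ - X]big_nat_recr //=.
have : pr (E m.+1 `&` E m.+2) <= pr (U `&` E m.+2).
  apply: le_pr; [apply: measurableI; apply: mE; lia|exact: measurableI|].
  by apply: setSI; rewrite /U big_nat_recr //=; exact: subsetUr.
lra.
Qed.

Lemma pr_bigsetU_chain_bounds (A : set T) (E D : nat -> set T) N :
  measurable A ->
  (forall j, (1 <= j <= N)%N ->
     [/\ measurable (E j), measurable (D j) & ~` D j `<=` E j]) ->
  A `<=` \big[setU/set0]_(1 <= j < N.+1) E j ->
  (P A <= \sum_(1 <= j < N.+1) P (E j))%E /\
  (P A <= \sum_(1 <= j < N.+1) P (E j) -
          \sum_(1 <= j < N) (1 - P (D j) - P (D j.+1) + P (D j `&` D j.+1)))%E.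
Proof.
move=> mA hED AE.
have mE j : (1 <= j <= N)%N -> measurable (E j) by case/hED.
have mD j : (1 <= j <= N)%N -> measurable (D j) by case/hED.
have mU : measurable (\big[setU/set0]_(1 <= j < N.+1) E j).
  rewrite big_nat_cond; apply: bigsetU_measurable => j /andP[? _].
  by apply: mE; lia.
have chain := @pr_chain_bigsetU E N mE.
have hA : pr A <= pr (\big[setU/set0]_(1 <= j < N.+1) E j) by exact: le_pr.
have hLB : \sum_(1 <= j < N) (1 - pr (D j) - pr (D j.+1) + pr (D j `&` D j.+1))
           <= \sum_(1 <= j < N) pr (E j `&` E j.+1).
  apply: ler_sum_nat => j hj.
  have [mEj mDj DEj] := hED j ltac:(lia).
  have [mEj1 mDj1 DEj1] := hED j.+1 ltac:(lia).
  rewrite -pr_setCI //; apply: le_pr; last exact: setISS.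
    by apply: measurableI; exact: measurableC.
  exact: measurableI.
have hEE : 0 <= \sum_(1 <= j < N) pr (E j `&` E j.+1).
  by apply: sumr_ge0 => j _; exact: pr_ge0.
have sumE : (\sum_(1 <= j < N.+1) P (E j) = (\sum_(1 <= j < N.+1) pr (E j))%:E)%E.
  by rewrite -sumEFin; apply: eq_big_nat => j hj; rewrite prE //; apply: mE.
have sumLB : (\sum_(1 <= j < N) (1 - P (D j) - P (D j.+1) + P (D j `&` D j.+1)) =
    (\sum_(1 <= j < N) (1 - pr (D j) - pr (D j.+1) + pr (D j `&` D j.+1)))%:E)%E.
  rewrite -sumEFin; apply: eq_big_nat => j hj.
  have mDj := mD j ltac:(lia); have mDj1 := mD j.+1 ltac:(lia).
  by rewrite !prE ?EFinD ?EFinB //; exact: measurableI.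
rewrite prE // sumE sumLB -EFinB !lee_fin; split; lra.
Qed.

End real_probability.

Section dot_product.
Context {R : realType} {n : nat}.
Implicit Types (u v z : 'rV[R]_n) (K L : set 'rV[R]_n).

Lemma dotvC u v : dotv u v = dotv v u.
Proof. by apply: eq_bigr => i _; rewrite mulrC. Qed.

Lemma dotvDr u v z : dotv u (v + z) = dotv u v + dotv u z.
Proof. by rewrite /dotv -big_split; apply: eq_bigr => i _; rewrite mxE mulrDr. Qed.

Lemma dotvZr u v (c : R) : dotv u (c *: v) = c * dotv u v.
Proof. by rewrite /dotv mulr_sumr; apply: eq_bigr => i _; rewrite mxE mulrCA. Qed.

Lemma dotvDl u v z : dotv (v + z) u = dotv v u + dotv z u.
Proof. by rewrite dotvC dotvDr !(dotvC u). Qed.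

Lemma dotvZl u v (c : R) : dotv (c *: v) u = c * dotv v u.
Proof. by rewrite dotvC dotvZr dotvC. Qed.

Lemma dotvv_ge0 u : 0 <= dotv u u.
Proof. by apply: sumr_ge0 => i _; rewrite -expr2 sqr_ge0. Qed.

Lemma enorm_sqr u : enorm u ^+ 2 = dotv u u.
Proof.
rewrite /enorm sqr_sqrtr; last by apply: sumr_ge0 => i _; exact: sqr_ge0.
by apply: eq_bigr => i _; rewrite expr2.
Qed.

Lemma ler_enorm u v : enorm u <= enorm v -> dotv u u <= dotv v v.
Proof. by rewrite -!enorm_sqr ler_sqr // nnegrE sqrtr_ge0. Qed.

Lemma dotv_ge0_of_minimal u v :
  (forall l : R, 0 < l <= 1 -> dotv u u <= dotv (u + l *: v) (u + l *: v)) ->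
  0 <= dotv u v.
Proof.
move=> umin; rewrite leNgt; apply/negP => uv_lt0.
have expand l : dotv (u + l *: v) (u + l *: v) =
    dotv u u + 2 * l * dotv u v + l ^+ 2 * dotv v v.
  by rewrite !dotvDl !dotvDr !dotvZl !dotvZr (dotvC v u); ring.
have vv_gt0 : 0 < dotv v v.
  rewrite lt_neqAle dotvv_ge0 andbT; apply/eqP => vv0.
  by have := umin 1; rewrite ltr01 lexx expand -vv0 => /(_ isT); lra.
pose l := Num.min 1 (- dotv u v / dotv v v).
have l_gt0 : 0 < l by rewrite lt_min ltr01 divr_gt0 // oppr_gt0.
have l_le1 : l <= 1 by rewrite ge_min lexx.
have lvv : l * dotv v v <= - dotv u v by rewrite -ler_pdivlMr // ge_min lexx orbT.
have := umin l; rewrite l_gt0 l_le1 expand => /(_ isT).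
have : l * (l * dotv v v) <= l * (- dotv u v) by rewrite ler_pM2l.
rewrite expr2; nra.
Qed.

Lemma segment_convex (x y : 'rV[R]_n) : convex_set_rV (segment x y).
Proof.
move=> _ _ l [l1 [/andP[l10 l11] ->]] [l2 [/andP[l20 l21] ->]] /andP[l_ge0 l_le1].
exists (l * l1 + (1 - l) * l2); split; last by apply/rowP => i; rewrite !mxE; ring.
have : l * l1 <= l * 1 by rewrite ler_wpM2l.
have : (1 - l) * l2 <= (1 - l) * 1 by rewrite ler_wpM2l ?subr_ge0.
have : 0 <= l * l1 by rewrite mulr_ge0.
have : 0 <= (1 - l) * l2 by rewrite mulr_ge0 ?subr_ge0.
move=> *; apply/andP; split; lra.
Qed.

(* Moving y1 towards z inside K, or y2 towards s inside L, cannot shorten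
   y1 - y2; the two first-order conditions add up to the claim. *)
Lemma closest_pair_separates {K L y1 y2} :
  convex_set_rV K -> convex_set_rV L -> K y1 -> L y2 ->
  (forall z1 z2, K z1 -> L z2 -> enorm (y1 - y2) <= enorm (z1 - z2)) ->
  forall z s, K z -> L s -> dotv (y1 - y2) (y1 - y2) <= dotv (y1 - y2) (z - s).
Proof.
move=> cK cL Ky1 Ly2 ymin z s Kz Ls.
set u := y1 - y2.
have uz : 0 <= dotv u (z - y1).
  apply: dotv_ge0_of_minimal => l /andP[l0 l1].
  have Kzl : K (l *: z + (1 - l) *: y1) by apply: cK => //; rewrite ltW.
  have := ler_enorm _ _ (ymin _ _ Kzl Ly2).
  suff -> : l *: z + (1 - l) *: y1 - y2 = u + l *: (z - y1) by [].
  by apply/rowP => i; rewrite !mxE; ring.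
have us : 0 <= dotv u (y2 - s).
  apply: dotv_ge0_of_minimal => l /andP[l0 l1].
  have Lsl : L (l *: s + (1 - l) *: y2) by apply: cL => //; rewrite ltW.
  have := ler_enorm _ _ (ymin _ _ Ky1 Lsl).
  suff -> : y1 - (l *: s + (1 - l) *: y2) = u + l *: (y2 - s) by [].
  by apply/rowP => i; rewrite !mxE; ring.
have -> : z - s = (z - y1) + u + (y2 - s) by apply/rowP => i; rewrite !mxE; ring.
by rewrite (dotvDr u (z - y1 + u)) (dotvDr u (z - y1) u); lra.
Qed.

(* When y1 = y2 the normal is 0 (as 0^-1 = 0) and the bound reads 0 <= 0. *)
Lemma closest_pair_margin {K L y1 y2} :
  convex_set_rV K -> convex_set_rV L -> K y1 -> L y2 ->
  (forall z1 z2, K z1 -> L z2 -> enorm (y1 - y2) <= enorm (z1 - z2)) ->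
  forall z s, K z -> L s ->
  enorm (y1 - y2) <= dotv ((enorm (y1 - y2))^-1 *: (y1 - y2)) (z - s).
Proof.
move=> cK cL Ky1 Ly2 ymin z s Kz Ls.
have := closest_pair_separates cK cL Ky1 Ly2 ymin z s Kz Ls.
rewrite dotvZl -enorm_sqr.
have [->|d_neq0] := eqVneq (enorm (y1 - y2)) 0; first by rewrite invr0 mul0r.
have d_gt0 : 0 < enorm (y1 - y2) by rewrite lt_neqAle eq_sym d_neq0 sqrtr_ge0.
by rewrite ler_pdivlMl // expr2.
Qed.

End dot_product.

Section entrywise_convergence.
Context {R : realType} {T : Type} (F : set_system T) {FF : Filter F}.

Lemma cvg_sum_fun (I : Type) (s : seq I) (f : I -> T -> R) (l : I -> R) :
  (forall i, f i @ F --> l i) ->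
  (fun x => \sum_(i <- s) f i x) @ F --> \sum_(i <- s) l i.
Proof.
move=> fl; elim: s => [|i s IH].
  by rewrite big_nil; under eq_fun do rewrite big_nil; exact: cvg_cst.
by rewrite big_cons; under eq_fun do rewrite big_cons; exact: cvgD.
Qed.

Lemma cvg_mx_entries m n (f : T -> 'M[R]_(m, n)) (L : 'M[R]_(m, n)) :
  (forall i j, (fun x => f x i j) @ F --> L i j) -> f @ F --> L.
Proof.
move=> fL; apply/cvg_ballP => e e0.
have : \forall x \near F, forall ij : 'I_m * 'I_n, ball (L ij.1 ij.2) e (f x ij.1 ij.2).
  by apply: filter_forall => ij; exact: cvg_ball (fL _ _) _ e0.
by apply: filterS => x Lx; split => // i j; exact: Lx (i, j).
Qed.

End entrywise_convergence.

Section continuity.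
Context {R : realType}.

Lemma mulmxr_continuous {m n p} (M : 'M[R]_(n, p)) :
  continuous (fun X : 'M[R]_(m, n) => X *m M).
Proof.
move=> X; apply: (@cvg_mx_entries _ _ (nbhs X)) => i j; rewrite mxE.
under eq_fun do rewrite mxE.
by apply: cvg_sum_fun => k; apply: cvgMr_tmp; exact: coord_continuous.
Qed.

Lemma dotv_continuous {n} (a : 'rV[R]_n) : continuous (dotv a).
Proof.
move=> v; apply: (@cvg_sum_fun _ _ (nbhs v)) => i.
by apply: cvgMl_tmp; exact: coord_continuous.
Qed.

Lemma closed_halfspace {n} (a : 'rV[R]_n) (c : R) : closed [set v | c <= dotv a v].
Proof.
exact: (preimage_closed (fun v _ => dotv_continuous a v) (@closed_ge _ c)).
Qed.

Lemma within_continuous_rV {A : set R} {n} {f : R -> 'rV[R]_n} :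
  (forall i, {within A, continuous (fun s => f s 0 i)}) ->
  {within A, continuous f}.
Proof.
move=> fc; apply/subspace_continuousP => x Ax.
apply: cvg_mx_entries => i j; rewrite ord1.
exact: (subspace_continuousP _ _).1 (fc j) x Ax.
Qed.

Lemma within_itv_cvg {n} {a b s e : R} {f : R -> 'rV[R]_n} :
  {within `[a, b], continuous f} -> a <= s <= b -> 0 < e ->
  \forall s' \near s, a <= s' <= b -> ball (f s) e (f s').
Proof.
move=> fc abs e0; have abs' : `[a, b]%classic s by rewrite /= in_itv.
have := cvg_ball (FF := within_filter _ (nbhs_filter s))
  ((subspace_continuousP _ _).1 fc s abs') e0.
by rewrite near_withinE; apply: filterS => s' + abs''; apply; rewrite /= in_itv.
Qed.

Lemma near_rational_time {n} {a b s e : R} {f : R -> 'rV[R]_n} :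
  {within `[a, b], continuous f} -> a <= s <= b -> 0 < e -> s != b ->
  exists2 q : rat, a <= ratr q <= b & ball (f s) e (f (ratr q)).
Proof.
move=> fc abs e0 sb; have /andP[a_s s_b] := abs.
have /nbhs_ballP[δ /= δ0 near_s] := within_itv_cvg fc abs e0.
have sb' : s < b by rewrite lt_neqAle sb.
have [q] := @rat_in_itvoo R s (Num.min b (s + δ)) ltac:(rewrite lt_min sb'; lra).
rewrite in_itv /= lt_min => /andP[sq /andP[qb qδ]].
have abq : a <= ratr q <= b by rewrite (ltW qb) andbT; lra.
exists q => //; apply: near_s abq.
by rewrite /ball /= ltr_distlC; lra.
Qed.

(* Compactness of [a, b]: near every time, the path stays away from K at all
   small enough scales, and finitely many such neighbourhoods cover [a, b]. *)
Lemma closed_hit_of_approach {n} {a b : R} {f : R -> 'rV[R]_n} {K} :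
  closed K -> {within `[a, b], continuous f} ->
  (forall k : nat, exists s, a <= s <= b /\ exists2 y, K y & ball y k.+1%:R^-1 (f s)) ->
  exists s, a <= s <= b /\ K (f s).
Proof.
move=> cK fc approach; apply: contrapT => nohit.
have := (near_covering_withinP _).2
  ((compact_near_coveringP _).1 (@segment_compact R a b))
  nat \oo (fun k s => ~ exists2 y, K y & ball y k.+1%:R^-1 (f s)) _.
case => [s|k0 _ farK].
  rewrite /= in_itv /= => abs.
  have nKfs : (~` K) (f s) by move=> Kfs; apply: nohit; exists s.
  have /nbhs_ballP[e /= e0 farKs] := closed_openC cK _ nKfs.
  have e20 : 0 < e / 2 by lra.
  near=> s' k => /= abs' [y Ky y_fs'].
  have fs' : ball (f s) (e / 2) (f s') by move: abs'; near: s'; exact: within_itv_cvg.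
  have k_small : k.+1%:R^-1 < e / 2 by near: k; exact: near_infty_natSinv_lt (PosNum e20).
  apply: (farKs y) => //; apply: le_ball (ball_triangle fs' (ball_sym y_fs')).
  by rewrite [leRHS](splitr e) lerD2l ltW.
have [s [abs yfs]] := approach k0.
by apply: (farK k0 (leqnn k0) s) yfs; rewrite /= in_itv.
Unshelve. all: by end_near.
Qed.

End continuity.

Section measurable_hitting.
Context {d : measure_display} {Omega : measurableType d} {R : realType}.
Context {n : nat}.
Implicit Types (v : Omega -> 'rV[R]_n) (U K : set 'rV[R]_n).

Lemma measurable_preimage_ball v (c : 'rV[R]_n) (e : R) :
  (forall i, measurable_fun setT (fun w => v w 0 i)) -> 0 < e ->
  measurable (v @^-1` ball c e).
Proof.
move=> mv e0.
have -> : v @^-1` ball c e =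
    \bigcap_(i in [set: 'I_n]) ((fun w => v w 0 i) @^-1` ball (c 0 i) e).
  apply/seteqP; split => [w [_ cw] i _|w cw]; first exact: cw.
  by split => // i j; rewrite ord1; exact: cw.
apply: fin_bigcap_measurable => [|i _]; first exact: finite_finset.
rewrite -[X in measurable X]setTI; apply: mv => //.
exact: measurable_realfun.measurable_ball.
Qed.

(* Open sets of R^n are countable unions of balls with rational centres and radii. *)
Lemma measurable_preimage_open v U :
  (forall i, measurable_fun setT (fun w => v w 0 i)) -> open U ->
  measurable (v @^-1` U).
Proof.
move=> mv oU.
pose box (pq : 'rV[rat]_n * rat) := ball (map_mx ratr pq.1 : 'rV[R]_n) (ratr pq.2).
pose B pq := if pselect ((0 : R) < ratr pq.2 /\ box pq `<=` U) is left _
             then v @^-1` box pq else set0.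
have -> : v @^-1` U = \bigcup_pq B pq.
  apply/seteqP; split => [w Uvw|w [pq _]]; last first.
    by rewrite /B; case: pselect => // -[_ boxU] /boxU.
  have /nbhs_ballP[e /= e0 vwU] := oU _ Uvw.
  have [q] := @rat_in_itvoo R 0 (e / 2) ltac:(lra).
  rewrite in_itv /= => /andP[q0 qe].
  have [p vwp] : exists p : 'rV[rat]_n, ball (map_mx ratr p : 'rV[R]_n) (ratr q) (v w).
    have near_rat i : exists r : rat, `|v w 0 i - ratr r| < ratr q.
      have [r] := @rat_in_itvoo R (v w 0 i - ratr q) (v w 0 i + ratr q) ltac:(lra).
      by rewrite in_itv /= => rq; exists r; rewrite ltr_norml; lra.
    have [f vwf] := choice near_rat.
    exists (\row_i f i); split => // i j.
    by rewrite ord1 /ball /= !mxE distrC; exact: vwf.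
  exists (p, q) => //; rewrite /B; case: pselect => [_|]; first exact: vwp.
  case; split => // z pz; apply: vwU.
  by apply: le_ball (ball_triangle (ball_sym vwp) pz); lra.
apply: countable_bigcupT_measurable => // pq; rewrite /B.
by case: pselect => [[q0 _]|_]; [exact: measurable_preimage_ball|exact: measurable0].
Qed.

(* Hitting K during [a, b] means coming 1/(k+1)-close to K, for every k, at a
   rational time of [a, b] or at b (the latter is needed when a = b). *)
Lemma measurable_hitting (a b : R) (g : R -> Omega -> 'rV[R]_n) K :
  a <= b -> closed K ->
  (forall w, {within `[a, b], continuous (g ^~ w)}) ->
  (forall s i, a <= s <= b -> measurable_fun setT (fun w => g s w 0 i)) ->
  measurable [set w | exists s, a <= s <= b /\ K (g s w)].
Proof.
move=> ab cK gc mg.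
pose nbhsK k := \bigcup_(y in K) ball y k.+1%:R^-1.
have nbhsK_open k : open (nbhsK k) by apply: bigcup_open => y _; exact: ball_open.
have ek_gt0 k : 0 < k.+1%:R^-1 :> R by rewrite invr_gt0.
pose close k (q : rat) := if pselect (a <= ratr q <= b) is left _
  then g (ratr q) @^-1` nbhsK k else set0.
have -> : [set w | exists s, a <= s <= b /\ K (g s w)] =
    \bigcap_k ((\bigcup_q close k q) `|` g b @^-1` nbhsK k).
  apply/seteqP; split => [w [s [abs Kgs]] k _|w closew].
    have [sb|sb] := eqVneq s b.
      by right; exists (g s w) => //; rewrite sb; exact: ballxx.
    have [q abq gq] := near_rational_time (gc w) abs (ek_gt0 k) sb.
    left; exists q => //; rewrite /close; case: pselect => // _.
    by exists (g s w).
  apply: (closed_hit_of_approach cK (gc w)) => k.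
  case: (closew k I) => [[q _]|gbK].
    by rewrite /close; case: pselect => // abq gq; exists (ratr q).
  by exists b; split; rewrite ?ab ?lexx.
apply: bigcapT_measurable => k; apply: measurableU.
  apply: bigcupT_measurable_rat => q; rewrite /close; case: pselect => [abq|_].
    by apply: measurable_preimage_open => [i|]; [exact: mg | exact: nbhsK_open].
  exact: measurable0.
apply: measurable_preimage_open => [i|]; last exact: nbhsK_open.
by apply: mg; rewrite ab lexx.
Qed.

End measurable_hitting.

Lemma in_bigsetU_nat {T : Type} (F : nat -> set T) m k x :
  (\big[setU/set0]_(m <= j < k) F j) x <-> exists2 j, (m <= j < k)%N & F j x.
Proof.
rewrite -bigcup_seq; split => -[j].
  by rewrite /= mem_index_iota => jmk Fjx; exists j.
by move=> jmk Fjx; exists j; rewrite //= mem_index_iota.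
Qed.

Lemma itv_cover {R : realType} (u : nat -> R) N s : (0 < N)%N ->
  u 0%N <= s <= u N -> exists2 j, (1 <= j <= N)%N & u j.-1 <= s <= u j.
Proof.
elim: N => [//|[|m] IH] _ sN; first by exists 1%N.
have [sm|ms] := leP s (u m.+1).
  by have [j jm sj] := IH isT ltac:(by case/andP: sN => ->); exists j => //; lia.
by exists m.+2 => //=; rewrite (ltW ms); case/andP: sN.
Qed.

Section increasing_times.
Context {R : realType} {N : nat} {u : nat -> R}.
Hypothesis u_lt : forall j, (j < N)%N -> u j < u j.+1.

Lemma incr_le i j : (i <= j <= N)%N -> u i <= u j.
Proof.
move=> /andP[ij jN].
apply: (@Order.NatMonotonyTheory.nondecn_inP _ _ [pred k | (k <= N)%N]);
  rewrite ?inE ?leEnat //.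
- by move=> a b aN bN c; rewrite !inE /= in aN bN *; rewrite ltEnat /= => /andP[_]; lia.
- by move=> k _; rewrite inE => kN; exact/ltW/u_lt.
- exact: leq_trans jN.
Qed.

Lemma hitting_time_split {T : Type} (Q : R -> set T) : (0 < N)%N ->
  [set x | exists s, u 0%N <= s <= u N /\ Q s x] =
  \big[setU/set0]_(1 <= j < N.+1) [set x | exists s, u j.-1 <= s <= u j /\ Q s x].
Proof.
move=> N_gt0; apply/seteqP; split => x.
  move=> [s [sN Qsx]]; apply/in_bigsetU_nat.
  by have [j jN sj] := itv_cover _ _ _ N_gt0 sN; exists j; [lia | exists s].
move=> /in_bigsetU_nat[j jN [s [/andP[js sj] Qsx]]]; exists s; split => //.
by rewrite (le_trans _ js) ?(le_trans sj) ?incr_le //; lia.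
Qed.

End increasing_times.

Section linear_interpolation.
Context {R : realType} {n : nat}.
Variables (x y : 'rV[R]_n) (a b : R).

Lemma interpolation_in_segment s : a < b -> a <= s <= b ->
  segment x y (x + ((s - a) / (b - a)) *: (y - x)).
Proof.
move=> ab /andP[a_s sb]; exists ((s - a) / (b - a)); split.
  apply/andP; split; first by rewrite divr_ge0 // subr_ge0 // ltW.
  by rewrite ler_pdivrMr ?subr_gt0 // mul1r lerD2r.
by apply/rowP => i; rewrite !mxE; ring.
Qed.

Lemma interpolation_continuous :
  continuous (fun s : R => x + ((s - a) / (b - a)) *: (y - x)).
Proof.
move=> s; apply: cvgD; first exact: cvg_cst.
apply: cvgZr_tmp; apply: cvgMr_tmp; apply: cvgB; [exact: cvg_id | exact: cvg_cst].
Qed.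

End linear_interpolation.

Section piecewise_linear_plan.
Context {R : realType} {n N : nat} {t : nat -> R} {xp : nat -> 'rV[R]_n}.
Context {xplan : R -> 'rV[R]_n}.
Hypothesis t_lt : forall j, (j < N)%N -> t j < t j.+1.
Hypothesis plan_piece : forall j s, (j < N)%N -> t j <= s <= t j.+1 ->
  xplan s = xp j + ((s - t j) / (t j.+1 - t j)) *: (xp j.+1 - xp j).

Lemma plan_in_segment j s : (1 <= j <= N)%N -> t j.-1 <= s <= t j ->
  segment (xp j.-1) (xp j) (xplan s).
Proof.
move=> jN js; have jN' : (j.-1 < N)%N by lia.
have j1 : j.-1.+1 = j by rewrite prednK //; lia.
have := plan_piece j.-1 s jN'; rewrite j1 => -> //.
by apply: interpolation_in_segment => //; have := t_lt _ jN'; rewrite j1.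
Qed.

Lemma plan_within_continuous j : (1 <= j <= N)%N ->
  {within `[t j.-1, t j], continuous xplan}.
Proof.
move=> jN; have jN' : (j.-1 < N)%N by lia.
have := @continuous_subspaceT _ _ `[t j.-1, t j]%classic _
  (interpolation_continuous (xp j.-1) (xp j) (t j.-1) (t j)).
apply: subspace_eq_continuous.
have j1 : j.-1.+1 = j by rewrite prednK //; lia.
move=> s; rewrite inE /= in_itv /= => js.
by rewrite /from_subspace (plan_piece j.-1 s jN') j1.
Qed.

End piecewise_linear_plan.

Section brownian_observation.
Context {d : measure_display} {Omega : measurableType d} {R : realType}.
Context {P : probability Omega R} {n : nat} {W : R -> Omega -> 'rV[R]_n}.
Hypothesis BM : std_brownian P W.
Variables (S : 'M[R]_n) (xplan : R -> 'rV[R]_n).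

Let xsys s w := xplan s + W s w *m S.

Lemma xsys_deviation s w : xsys s w - xplan s = W s w *m S.
Proof. by rewrite /xsys addrAC subrr add0r. Qed.

Lemma noise_within_continuous (A : set R) w : A `<=` `[0, +oo[%classic ->
  {within A, continuous (fun s => W s w *m S)}.
Proof.
case: BM => _ Wc _ _ A0.
apply: (@continuous_subspaceW _ _ A `[0, +oo[%classic _ A0).
move=> s; exact: (continuous_comp (within_continuous_rV (Wc w) s)
  (mulmxr_continuous S _)).
Qed.

Lemma noise_measurable s i : 0 <= s -> measurable_fun setT (fun w => (W s w *m S) 0 i).
Proof.
case: BM => _ _ Wm _ s0; under eq_fun do rewrite mxE.
apply: measurable_sum => k; apply: measurable_realfun.measurable_funM => //.
exact: Wm.
Qed.

Lemma measurable_exceedance (u : 'rV[R]_n) (c a b : R) : 0 <= a <= b ->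
  measurable [set w | exists s, a <= s <= b /\ c <= dotv u (xsys s w - xplan s)].
Proof.
move=> /andP[a0 ab]; under eq_set do under eq_exists do rewrite xsys_deviation.
apply: (measurable_hitting _ _ (fun s w => W s w *m S) _ ab (closed_halfspace u c))
  => [w|s i /andP[a_s _]].
  apply: noise_within_continuous => s.
  by rewrite /= !in_itv /= => /andP[/(le_trans a0)->].
exact/noise_measurable/(le_trans a0).
Qed.

Lemma measurable_below_on_grid (u : 'rV[R]_n) (c : R) (th : nat -> R) (r : nat) :
  (forall i, (i <= r)%N -> 0 <= th i) ->
  measurable [set w | forall i, (i <= r)%N -> dotv u (xsys (th i) w - xplan (th i)) < c].
Proof.
move=> th0.
have -> : [set w | forall i, (i <= r)%N -> dotv u (xsys (th i) w - xplan (th i)) < c] =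
    \bigcap_(i in [set i | (i <= r)%N])
      ((fun w => dotv u (W (th i) w *m S)) @^-1` `]-oo, c[).
  by apply/seteqP; split => w wc i /wc; rewrite /= ?xsys_deviation in_itv.
apply: bigcap_measurableType => i /th0 thi0; rewrite -[X in measurable X]setTI.
have mf : measurable_fun setT (fun w => dotv u (W (th i) w *m S)).
  apply: measurable_sum => k; apply: measurable_realfun.measurable_funM => //.
  exact: noise_measurable.
exact: mf measurableT _ (measurable_itv _).
Qed.

Lemma measurable_obstacle_hit (K : set 'rV[R]_n) (a b : R) :
  closed K -> 0 <= a <= b -> {within `[a, b], continuous xplan} ->
  measurable [set w | exists s, a <= s <= b /\ K (xsys s w)].
Proof.
move=> cK /andP[a0 ab] planc.
apply: (measurable_hitting _ _ xsys _ ab cK) => [w|s i /andP[a_s _]].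
  apply: within_continuousD planc _.
  apply: noise_within_continuous => s.
  by rewrite /= !in_itv /= => /andP[/(le_trans a0)->].
under eq_fun do rewrite mxE.
apply: measurable_realfun.measurable_funD; first exact: measurable_cst.
exact/noise_measurable/(le_trans a0).
Qed.

End brownian_observation.

Theorem mainTheorem3 (R : realType) (d : measure_display)
  (Omega : measurableType d) (P : probability Omega R)
  (n N : nat) (Xobs : set 'rV[R]_n)
  (xp : nat -> 'rV[R]_n) (t : nat -> R) (xplan : R -> 'rV[R]_n)
  (Rm S : 'M[R]_n) (W : R -> Omega -> 'rV[R]_n)
  (y1 y2 : nat -> 'rV[R]_n) (r : nat -> nat) (th : nat -> nat -> R) :
  (* obstacle: nonempty compact convex *)
  Xobs !=set0 -> compact Xobs -> convex_set_rV Xobs ->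
  (* waypoints and times 0 = t_0 < t_1 < ... < t_N = T *)
  (0 < N)%N ->
  (forall j, (1 <= j <= N)%N -> xp j != xp j.-1) ->
  t 0%N = 0 ->
  (forall j, (j < N)%N -> t j < t j.+1) ->
  (* piecewise-linear plan *)
  (forall j tau, (j < N)%N -> t j <= tau <= t j.+1 ->
     xplan tau = xp j + ((tau - t j) / (t j.+1 - t j)) *: (xp j.+1 - xp j)) ->
  (* segments avoid the obstacle *)
  (forall j, (1 <= j <= N)%N -> segment (xp j.-1) (xp j) `&` Xobs = set0) ->
  (* noise: S = R^{1/2} (the symmetric PSD square root of the SPD matrix Rm) *)
  sym_mx Rm -> posdef_mx Rm ->
  sym_mx S -> possemidef_mx S -> S *m S = Rm ->
  std_brownian P W ->
  (* (y1 j, y2 j) minimizes ||y1 - y2|| over Xobs x S_j *)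
  (forall j, (1 <= j <= N)%N ->
     [/\ Xobs (y1 j), segment (xp j.-1) (xp j) (y2 j) &
         forall z1 z2, Xobs z1 -> segment (xp j.-1) (xp j) z2 ->
           enorm (y1 j - y2 j) <= enorm (z1 - z2)]) ->
  (* discretizations t_{j-1} = th j 0 < ... < th j (r j) = t_j *)
  (forall j, (1 <= j <= N)%N ->
     [/\ th j 0%N = t j.-1, th j (r j) = t j &
         forall i, (i < r j)%N -> th j i < th j i.+1]) ->
  let xsys : R -> Omega -> 'rV[R]_n := fun tau w => xplan tau + W tau w *m S in
  let dd : nat -> R := fun j => enorm (y1 j - y2 j) in
  let a : nat -> 'rV[R]_n := fun j => (dd j)^-1 *: (y1 j - y2 j) in
  let ww : nat -> R -> Omega -> R :=
    fun j tau w => dotv (a j) (xsys tau w - xplan tau) in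
  let E : nat -> set Omega :=
    fun j => [set w | exists tau, t j.-1 <= tau <= t j /\ dd j <= ww j tau w] in
  let D : nat -> set Omega :=
    fun j => [set w | forall i, (i <= r j)%N -> ww j (th j i) w < dd j] in
  let pLB : nat -> \bar R :=
    fun j => (1 - P (D j) - P (D j.+1) + P (D j `&` D j.+1))%E in
  let Risk : \bar R :=
    P [set w | exists tau, 0 <= tau <= t N /\ Xobs (xsys tau w)] in
  (Risk <= \sum_(1 <= j < N.+1) P (E j))%E /\
  (Risk <= \sum_(1 <= j < N.+1) P (E j) - \sum_(1 <= j < N) pLB j)%E.
Proof.
move=> _ cXobs convXobs N_gt0 _ t0 t_lt plan _ _ _ _ _ _ BM ymin grid.
move=> xsys dd a ww E D pLB Risk.
have piece j : (1 <= j <= N)%N -> 0 <= t j.-1 <= t j.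
  by move=> jN; rewrite -t0 !(incr_le t_lt) //; lia.
have grid_in j i : (1 <= j <= N)%N -> (i <= r j)%N -> t j.-1 <= th j i <= t j.
  move=> jN ir; have [<- <- th_lt] := grid j jN.
  by rewrite !(incr_le th_lt) //; lia.
have hit_margin j s w : (1 <= j <= N)%N -> t j.-1 <= s <= t j ->
    Xobs (xsys s w) -> dd j <= ww j s w.
  move=> jN js Xs; have [Ky1 Sy2 y_min] := ymin j jN.
  exact: (closest_pair_margin convXobs (segment_convex _ _) Ky1 Sy2 y_min _ _ Xs
    (plan_in_segment t_lt plan _ _ jN js)).
have risk_split := hitting_time_split t_lt (fun s w => Xobs (xsys s w)) N_gt0.
rewrite t0 in risk_split; rewrite /Risk risk_split.
apply: pr_bigsetU_chain_bounds => [|j jN|w /in_bigsetU_nat[j jN [s [js Xs]]]].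
- rewrite big_nat_cond; apply: bigsetU_measurable => j /andP[jN _].
  have closed_Xobs : closed Xobs := compact_closed (@norm_hausdorff _ _) cXobs.
  exact: (measurable_obstacle_hit BM S xplan Xobs _ _ closed_Xobs (piece j jN)
    (plan_within_continuous plan _ jN)).
- split; [exact: (measurable_exceedance BM _ _ _ _ _ _ (piece j jN))| |].
    apply: (measurable_below_on_grid BM) => i ir.
    move: (piece j jN) (grid_in j i jN ir) => /andP[t0j _] /andP[tjth _].
    exact: le_trans t0j tjth.
  move=> w /= below; apply: contrapT => noE; apply: below => i ir.
  rewrite ltNge; apply/negP => exceed; apply: noE.
  by exists (th j i); split => //; exact: grid_in.
- by apply/in_bigsetU_nat; exists j => //; exists s; split => //; exact: hit_margin.
Qed.
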